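(* Let $p\neq q$ be primes and $n$ a positive integer. Suppose $T$ is a numerical semigroup which is cyclotomic of depth $p^nq$ and height $1$. Then $T=\langle p^n,q\rangle$.
   Context: A numerical semigroup is a submonoid $T$ of $(\mathbb N,+)$ with $\mathbb N\setminus T$ finite; $\langle a,b\rangle$ denotes the submonoid generated by $a,b$. $\mathrm P_T(x)=(1-x)\sum_{t\in T}x^t$. $T$ is cyclotomic if $\mathrm P_T$ has all complex roots in the closed unit disc. $T$ is cyclotomic of depth $d$ and height $h$ if $\mathrm P_T(x)\mid (x^d-1)^h$ with $d,h$ chosen minimally, that is, $\mathrm P_T(x)$ does not divide $(x^m-1)^{h-1}$ for any $m$, and does not divide $(x^{d'}-1)^h$ for any divisor $d'<d$ of $d$. *)

From mathcomp Require Import all_boot all_order all_algebra.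
Set Implicit Arguments. Unset Strict Implicit. Unset Printing Implicit Defensive.
Import GRing.Theory.
Local Open Scope ring_scope.

Definition numerical_semigroup (T : pred nat) : Prop :=
  T 0%N /\ (forall a b, T a -> T b -> T (a + b)%N) /\
  exists N : nat, forall k, (N <= k)%N -> T k.

(* P is the polynomial P_T(x) = (1 - x) * sum_{t in T} x^t, i.e. its
   coefficient of x^k is [k in T] - [k-1 in T] (with the second term 0 for k=0). *)
Definition is_PT (T : pred nat) (P : {poly int}) : Prop :=
  forall k : nat, P`_k = (T k)%:Z - ((0 < k)%N && T k.-1)%:Z.

Definition cyclotomic_depth_height (T : pred nat) (d h : nat) : Prop :=
  (0 < d)%N /\ (0 < h)%N /\
  exists P : {poly int}, is_PT T P /\
    P %| ('X^d - 1) ^+ h /\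
    (forall m : nat, (0 < m)%N -> ~~ (P %| ('X^m - 1) ^+ h.-1)) /\
    (forall d' : nat, (0 < d')%N -> (d' %| d)%N -> (d' < d)%N ->
        ~~ (P %| ('X^d' - 1) ^+ h)).

Definition in_gen2 (a b t : nat) : Prop := exists i j : nat, t = (i * a + j * b)%N.

(* P_T is monic, P_T(1) = 1 and P_T divides x^(p^n q) - 1, so P_T is a product
   of distinct cyclotomic polynomials Phi_e with e | p^n q.  Evaluating at 1
   rules out e = 1, q and the prime powers p^i, leaving Phi_(p^i q), 1 <= i <= n.
   For j maximal such that Phi_(p q), ..., Phi_(p^j q) all occur, the identity
   prod_(i <= j) Phi_(p^i q) = (x - 1)(x^(p^j q) - 1) / ((x^(p^j) - 1)(x^q - 1))
   turns (1 - x^q) sum_(t in T) x^t into (1 + x^a + ... + x^((q-1) a)) C(x^(p a))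
   with a = p^j.  Comparing coefficients gives a, q in T and then C = 1;
   hence P_T divides x^(a q) - 1, the minimality of the depth forces j = n, and
   the coefficient identity then says exactly that T = <p^n, q>. *)

From mathcomp Require Import all_boot all_order all_algebra all_field.
From mathcomp Require Import ring zify.
Set Implicit Arguments. Unset Strict Implicit. Unset Printing Implicit Defensive.
Import GRing.Theory Num.Theory.
Local Open Scope ring_scope.

Lemma eqp_dvdp_separable_prod (F : fieldType) (I : eqType) (s : seq I)
    (G : I -> {poly F}) (p : {poly F}) :
  separable_poly (\prod_(i <- s) G i) -> p %| \prod_(i <- s) G i ->
  (forall i, i \in s -> (G i %| p) || coprimep (G i) p) ->
  (forall i, i \in s -> (1 < size (G i))%N) ->
  p %= \prod_(i <- s | G i %| p) G i.
Proof.
elim: s p => [|e s IH] p.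
  by rewrite !big_nil => _ p1 _ _; rewrite /eqp p1 dvd1p.
rewrite !big_cons separable_mul => /and3P[_ sepR coR] pdv hdc hsz.
have Ge0 : G e != 0.
  by rewrite -size_poly_gt0 (ltn_trans _ (hsz e _)) // mem_head.
have hdc' i : i \in s -> (G i %| p) || coprimep (G i) p.
  by move=> hi; apply: hdc; rewrite inE hi orbT.
have hsz' i : i \in s -> (1 < size (G i))%N.
  by move=> hi; apply: hsz; rewrite inE hi orbT.
have coe i : i \in s -> coprimep (G i) (G e).
  move=> hi; rewrite coprimep_sym; apply: coprimep_dvdl coR.
  by rewrite (big_rem i) //= dvdp_mulIl.
case: ifP => Gep; last first.
  have cop : coprimep (G e) p by have := hdc e (mem_head _ _); rewrite Gep.
  apply: IH => //.
  by rewrite -(Gauss_dvdpr _ (_ : coprimep p (G e))) // coprimep_sym.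
have pE : p = (p %/ G e) * G e by rewrite divpK.
set p' := p %/ G e in pE.
have p'dv : p' %| p by rewrite [X in _ %| X]pE; exact: dvdp_mulIl.
have eq_dvd i : i \in s -> (G i %| p) = (G i %| p').
  move=> hi; apply/idP/idP => [h|h]; last exact: dvdp_trans h p'dv.
  by move: h; rewrite pE Gauss_dvdpl // coe.
have IH' : p' %= \prod_(i <- s | G i %| p') G i.
  apply: IH => //.
  - by move: pdv; rewrite pE mulrC dvdp_mul2l.
  - move=> i hi; case/orP: (hdc' i hi) => [h|h].
      by rewrite -eq_dvd // h.
    by rewrite (coprimep_dvdl p'dv h) orbT.
rewrite [X in _ %= X](_ : _ = G e * \prod_(i <- s | G i %| p') G i).
  by rewrite {1}pE mulrC eqp_mul2l.
congr (_ * _); rewrite big_seq_cond [RHS]big_seq_cond; apply: eq_bigl => i.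
by case hi: (i \in s) => //=; rewrite eq_dvd.
Qed.

Lemma totient_mul_prime (e p : nat) : prime p -> (p %| e)%N ->
  totient (e * p) = (totient e * p)%N.
Proof.
move=> pp pe; have [->|e0] := posnP e; first by rewrite mul0n.
have [m cpm eE] := pfactor_coprime pp e0.
set k := logn p e in eE.
have k0 : (0 < k)%N.
  case: k eE => [|k'] // eE; rewrite eE expn0 muln1 in pe.
  by rewrite prime_coprime // pe in cpm.
have cm j : coprime m (p ^ j) by apply: coprimeXr; rewrite coprime_sym.
rewrite eE -mulnA -expnSr !totient_coprime // !totient_pfactor //.
by rewrite -(prednK k0) /= expnSr !mulnA.
Qed.

Lemma perm_divisors_expn p n : prime p ->
  perm_eq (divisors (p ^ n)) [seq p ^ i | i <- iota 0 n.+1]%N.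
Proof.
move=> pp; have p1 := prime_gt1 pp.
apply: uniq_perm; first exact: divisors_uniq.
  rewrite map_inj_uniq ?iota_uniq // => i k; exact: expnI.
move=> e; rewrite -dvdn_divisors ?expn_gt0 ?prime_gt0 //.
apply/idP/mapP => [/(dvdn_pfactor _ _ pp)[i le_in ->]|[i]].
  by exists i; rewrite // mem_iota ltnS.
by rewrite mem_iota ltnS => /andP[_ le_in] ->; rewrite dvdn_exp2l.
Qed.

Lemma perm_divisors_expn_mul p q n : prime p -> prime q -> p != q ->
  perm_eq (divisors (p ^ n * q))
    ([seq p ^ i | i <- iota 0 n.+1] ++ [seq p ^ i * q | i <- iota 0 n.+1])%N.
Proof.
move=> pp pq npq; have p1 := prime_gt1 pp; have q1 := prime_gt1 pq.
have inj_pow : injective (fun i => p ^ i)%N by move=> i k; exact: expnI.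
have inj_powq : injective (fun i => p ^ i * q)%N.
  by move=> i k /eqP; rewrite eqn_pmul2r ?prime_gt0 // => /eqP/inj_pow.
apply: uniq_perm; first exact: divisors_uniq.
  rewrite cat_uniq !(map_inj_uniq, iota_uniq) // andbT.
  apply/hasPn => _ /mapP[i _ ->]; apply/mapP => -[k _] E.
  have : (q %| p ^ k)%N by rewrite -E dvdn_mull.
  by rewrite Euclid_dvdX // dvdn_prime2 // eq_sym (negbTE npq).
move=> e; rewrite mem_cat -dvdn_divisors ?muln_gt0 ?expn_gt0 ?prime_gt0 //.
have divs_pn := perm_mem (perm_divisors_expn n pp).
apply/idP/idP => [he|].
  case: (boolP (q %| e)%N) => qe.
    move: he; rewrite -(divnK qe) dvdn_pmul2r ?prime_gt0 //.
    rewrite dvdn_divisors ?expn_gt0 ?prime_gt0 // divs_pn => /mapP[i hi ->].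
    by apply/orP; right; apply/mapP; exists i.
  move: he; rewrite Gauss_dvdl; last by rewrite coprime_sym prime_coprime.
  by rewrite dvdn_divisors ?expn_gt0 ?prime_gt0 // divs_pn => ->.
case/orP => /mapP[i]; rewrite mem_iota ltnS => /andP[_ le_in] ->.
  by rewrite dvdn_mulr // dvdn_exp2l.
by rewrite dvdn_pmul2r ?prime_gt0 // dvdn_exp2l.
Qed.

Local Notation toC := (map_poly (intr : int -> algC)).

Definition PhiC (e : nat) : {poly algC} := toC 'Phi_e.

Lemma toC_inj : injective toC.
Proof. exact: map_inj_poly (@intr_inj algC) (rmorph0 _). Qed.

Lemma toC_monic (P : {poly int}) : P \is monic -> toC P \is monic.
Proof.
by move=> mP; rewrite monicE lead_coef_map_inj ?(monicP mP) ?rmorph1 //; exact: intr_inj.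
Qed.

Lemma toC_XnB1 m : toC ('X^m - 1) = 'X^m - 1.
Proof. by rewrite rmorphB rmorph1 /= map_polyXn. Qed.

Lemma PhiC_monic e : PhiC e \is monic.
Proof. exact/toC_monic/Cyclotomic_monic. Qed.

Lemma size_PhiC e : size (PhiC e) = (totient e).+1.
Proof. by rewrite size_map_inj_poly ?size_Cyclotomic //; exact: intr_inj. Qed.

Lemma root_PhiC e z : (0 < e)%N -> root (PhiC e) z = e.-primitive_root z.
Proof.
move=> e0; have [z0 pz0] := C_prim_root_exists e0.
by rewrite /PhiC (Cintr_Cyclotomic pz0) root_cyclotomic.
Qed.

(* [PhiC e] is the minimal polynomial over [rat] of each of its roots. *)
Lemma PhiC_dvd (G : {poly int}) e z :
  e.-primitive_root z -> root (toC G) z -> PhiC e %| toC G.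
Proof.
move=> pz Gz; rewrite /PhiC (Cintr_Cyclotomic pz) -(minCpoly_cyclotomic pz).
have [pf [-> _] dv] := minCpolyP z.
have -> : toC G = map_poly ratr (map_poly (intr : int -> rat) G).
  by rewrite -map_poly_comp; apply: eq_map_poly => b /=; rewrite rmorph_int.
by rewrite dvdp_map -dv -map_poly_comp (eq_map_poly (rmorph_int _)).
Qed.

Lemma PhiC_dvd_or_coprime (G : {poly int}) e : (0 < e)%N ->
  (PhiC e %| toC G) || coprimep (PhiC e) (toC G).
Proof.
move=> e0; case: (boolP (coprimep _ _)) => [|]; first by rewrite orbT.
rewrite coprimep_def orbF => /closed_rootP[z].
by rewrite root_gcd root_PhiC // => /andP[pz]; exact: PhiC_dvd.
Qed.

Lemma prod_PhiC d : (0 < d)%N -> \prod_(e <- divisors d) PhiC e = 'X^d - 1.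
Proof.
by move=> d0; rewrite -rmorph_prod prod_Cyclotomic // rmorphB rmorph1 /= map_polyXn.
Qed.

Lemma PhiC_mul_prime_comp e p : prime p -> (p %| e)%N ->
  PhiC (e * p) = PhiC e \Po 'X^p.
Proof.
move=> pp pe; have [->|e0] := posnP e.
  by rewrite mul0n /PhiC Cyclotomic0 rmorph1 -polyC1 comp_polyC.
have ep0 : (0 < e * p)%N by rewrite muln_gt0 e0 prime_gt0.
have monic_comp : PhiC e \Po 'X^p \is monic.
  rewrite monicE lead_coef_comp ?size_polyXn ?ltnS ?prime_gt0 //.
  by rewrite lead_coefXn expr1n mulr1 -monicE PhiC_monic.
apply/eqP; rewrite -eqp_monic ?PhiC_monic // -dvdp_size_eqp.
  rewrite (polySpred (monic_neq0 monic_comp)) size_comp_poly !size_PhiC.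
  by rewrite size_polyXn /= totient_mul_prime.
have [z pz] := C_prim_root_exists ep0.
have pzp : e.-primitive_root (z ^+ p).
  have := exp_prim_root pz p.
  by rewrite (gcdn_idPl (dvdn_mull _ (dvdnn _))) mulnK // prime_gt0.
have <- : toC ('Phi_e \Po 'X^p) = PhiC e \Po 'X^p.
  by rewrite map_comp_poly map_polyXn.
apply: (PhiC_dvd pz).
rewrite map_comp_poly map_polyXn; apply/rootP.
by rewrite horner_comp hornerXn; apply/rootP; rewrite -/(PhiC e) root_PhiC.
Qed.

Lemma PhiC_mul_expn_comp e p i : prime p -> (p %| e)%N ->
  PhiC (e * p ^ i) = PhiC e \Po 'X^(p ^ i).
Proof.
move=> pp pe; elim: i => [|i IH]; first by rewrite muln1 expn0 expr1 comp_polyXr.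
rewrite expnSr mulnA PhiC_mul_prime_comp ?dvdn_mulr // IH.
by rewrite -comp_polyA comp_Xn_poly -exprM mulnC.
Qed.

Definition geomX (a q : nat) : {poly algC} := \sum_(i < q) 'X^(i * a).

Lemma mul_geomX a q : ('X^a - 1) * geomX a q = 'X^(a * q) - 1.
Proof.
elim: q => [|q IH]; first by rewrite /geomX big_ord0 mulr0 muln0 expr0 subrr.
rewrite /geomX big_ord_recr /= mulrDr IH mulnS exprD (mulnC q a); ring.
Qed.

Lemma prod_PhiC_expn p n : prime p ->
  \prod_(i <- iota 0 n.+1) PhiC (p ^ i) = 'X^(p ^ n) - 1.
Proof.
move=> pp; rewrite -prod_PhiC ?expn_gt0 ?prime_gt0 //.
by rewrite (perm_big _ (perm_divisors_expn n pp)) big_map.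
Qed.

Lemma PhiC1 : PhiC 1 = 'X - 1.
Proof.
by have := prod_PhiC (ltn0Sn 0); rewrite (_ : divisors 1 = [:: 1%N]) // big_seq1 expr1.
Qed.

Lemma prod_PhiC_expn_mul p q n : prime p -> prime q -> p != q ->
  ('X^(p ^ n) - 1) * \prod_(i <- iota 0 n.+1) PhiC (p ^ i * q) = 'X^(p ^ n * q) - 1.
Proof.
move=> pp pq npq; rewrite -[RHS]prod_PhiC ?muln_gt0 ?expn_gt0 ?prime_gt0 //.
rewrite (perm_big _ (perm_divisors_expn_mul n pp pq npq)) big_cat !big_map.
by rewrite prod_PhiC_expn.
Qed.

Lemma mul_prod_PhiC_expn_mul p q j : prime p -> prime q -> p != q ->
  ('X^(p ^ j) - 1) * ('X^q - 1) * \prod_(i <- iota 1 j) PhiC (p ^ i * q)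
  = ('X - 1) * ('X^(p ^ j * q) - 1).
Proof.
move=> pp pq npq; have := prod_PhiC_expn_mul 0 pp pq npq.
rewrite -(prod_PhiC_expn_mul j pp pq npq) big_seq1 expn0 mul1n expr1 => <-.
by rewrite big_cons expn0 mul1n; ring.
Qed.

Lemma horner1_geomX a q : (geomX a q).[1] = q%:R.
Proof.
rewrite /geomX horner_sum; under eq_bigr do rewrite hornerXn expr1n.
by rewrite sumr_const card_ord.
Qed.

Lemma PhiC_expS p k : prime p -> PhiC (p ^ k.+1) = geomX (p ^ k) p.
Proof.
move=> pp; have nz : ('X^(p ^ k) - 1 : {poly algC}) != 0.
  by rewrite -size_poly_gt0 size_XnsubC // expn_gt0 prime_gt0.
apply: (mulfI nz); rewrite mul_geomX -expnSr -[RHS](prod_PhiC_expn k.+1 pp) -[k.+2]addn1.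
by rewrite iotaD big_cat big_seq1 add0n prod_PhiC_expn.
Qed.

Lemma horner1_PhiC_expS p k : prime p -> (PhiC (p ^ k.+1)).[1] = p%:R.
Proof. by move=> pp; rewrite PhiC_expS // horner1_geomX. Qed.

Section SemigroupPolynomial.

Variables (T : pred nat) (P : {poly int}).
Hypotheses (sgT : numerical_semigroup T) (PT : is_PT T P).

Lemma sum_coef_PT k : \sum_(i < k.+1) P`_i = T k.
Proof.
elim: k => [|k IH]; first by rewrite big_ord1 PT subr0.
by rewrite big_ord_recr /= IH PT /=; ring.
Qed.

Lemma PT_neq0 : P != 0.
Proof. by apply/eqP=> P0; have := PT 0; case: sgT => T0 _; rewrite P0 coef0 T0. Qed.

(* Past [size P] the coefficients vanish, so [T] is constant from [(size P).-1] on. *)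
Lemma mem_PT_size : T (size P).-1.
Proof.
case: sgT => _ [_ [N TN]]; set K := (size P).-1.
have stepT t : T (K + t)%N.+1 = T (K + t)%N.
  have : P`_(K + t)%N.+1 = 0.
    by rewrite nth_default // /K; case: (size P) => //= s; rewrite ltnS leq_addr.
  by rewrite PT /=; case: (T (K + t)%N.+1); case: (T (K + t)%N).
have constT t : T (K + t)%N = T K by elim: t => [|t IH]; rewrite ?addn0 // addnS stepT.
by rewrite -(constT N) TN // leq_addl.
Qed.

Lemma PT_monic : P \is monic.
Proof.
have := PT_neq0; rewrite monicE lead_coefE -lead_coef_eq0 lead_coefE PT.
by rewrite mem_PT_size; case: (_ && _).
Qed.

Lemma horner1_PT : P.[1] = 1.
Proof.
rewrite horner_coef; under eq_bigr do rewrite expr1n mulr1.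
by rewrite (polySpred PT_neq0) sum_coef_PT mem_PT_size.
Qed.

Lemma PT_eq1 : T 1%N -> P = 1.
Proof.
case: sgT => T0 [Tadd _] T1; have Tall k : T k.
  by elim: k => // k IH; rewrite -addn1 Tadd.
by apply/polyP => k; rewrite PT coef1 !Tall; case: k.
Qed.

End SemigroupPolynomial.

Lemma coef_toC_PT (T : pred nat) (P : {poly int}) K : is_PT T P ->
  (toC P)`_K = (T K)%:R - ((0 < K)%N && T K.-1)%:R.
Proof. by move=> PT; rewrite coef_map PT /= intrB. Qed.

(* [toC P * ('X^q - 1) / ('X - 1)] is the series [(1 - x^q) \sum_(t in T) x^t]. *)
Lemma coef_PT_relation (T : pred nat) (P : {poly int}) q (U : {poly algC}) :
  is_PT T P -> toC P * ('X^q - 1) = ('X - 1) * U ->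
  forall K, (T K)%:R - ((q <= K)%N && T (K - q)%N)%:R = U`_K.
Proof.
move=> PT hid; pose w K : algC := (T K)%:R - ((q <= K)%N && T (K - q)%N)%:R.
move: hid; rewrite mulrBr mulr1 mulrBl mul1r => hid.
have coefK K := congr1 (fun r : {poly algC} => r`_K) hid.
have w0 : w 0%N = U`_0.
  have := coefK 0%N; rewrite /= !coefB coefMXn coefXM /w !(coef_toC_PT _ PT) /=.
  rewrite sub0n subr0 sub0r => E; apply: oppr_inj; rewrite -E.
  by case: (posnP q) => [->|q0] /=; rewrite ?subrr ?oppr0 // leqNgt q0 subr0 sub0r.
have stepw K : w K.+1 - w K = U`_K.+1 - U`_K.
  have := coefK K.+1; rewrite /= !coefB coefMXn coefXM /w !(coef_toC_PT _ PT) /= => E.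
  rewrite -[RHS]opprB -E /w.
  case: (ltngtP q K.+1) => [qK|Kq|->]; rewrite ?subnn /=.
  - have qK' : (q <= K)%N by rewrite -ltnS.
    by rewrite qK' subSn //=; ring.
  - by rewrite leqNgt (ltn_trans (ltnSn K) Kq) /=; ring.
  - by rewrite ltnn /=; ring.
move=> K; rewrite -/(w K); elim: K => // K IH.
by rewrite -(subrK (w K) (w K.+1)) stepw IH subrK.
Qed.

Lemma coef_geomX a q K : (0 < a)%N ->
  (geomX a q)`_K = ((a %| K)%N && (K %/ a < q)%N)%:R.
Proof.
move=> a0; elim: q => [|q IH]; first by rewrite /geomX big_ord0 coef0 ltn0 andbF.
rewrite /geomX big_ord_recr /= coefD IH coefXn.
have [aK|naK] /= := boolP (a %| K)%N; last first.
  by case: eqP => [E|_]; [move: naK; rewrite E dvdn_mull | rewrite addr0].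
rewrite -(divnK aK) mulnK // eqn_pmul2r // ltnS (leq_eqVlt (K %/ a)).
by case: (ltngtP (K %/ a) q) => //= _; rewrite ?addr0 ?add0r.
Qed.

Lemma coef_geomX_comp_ndvd (C : {poly algC}) a q M K :
  (0 < M)%N -> (a %| M)%N -> ~~ (a %| K)%N -> (geomX a q * (C \Po 'X^M))`_K = 0.
Proof.
move=> M0 aM naK; rewrite coefM big1 // => i _.
rewrite coef_geomX ?(dvdn_gt0 M0 aM) // coef_comp_poly_Xn //.
have [ai|] := boolP (a %| i)%N; last by rewrite mul0r.
have [MK|] := boolP (M %| K - i)%N; last by rewrite mulr0.
case/negP: naK; rewrite -(subnKC (ltn_ord i : (i <= K)%N)) dvdn_add //.
exact: dvdn_trans aM MK.
Qed.

Lemma coef_geomX_comp_lt (C : {poly algC}) a q M s K : (0 < M)%N -> (0 < s)%N ->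
  (forall t, (0 < t < s)%N -> C`_t = 0) -> (K <= s * M)%N ->
  (geomX a q * (C \Po 'X^M))`_K =
    (geomX a q)`_K * C`_0 + (if K == (s * M)%N then (geomX a q)`_0 * C`_s else 0).
Proof.
move=> M0 s0 hC Ks.
have compC0 x : (0 < x < s * M)%N -> (C \Po 'X^M)`_x = 0.
  case/andP=> x0 xs; rewrite coef_comp_poly_Xn //.
  have [Mx|] := boolP (M %| x)%N => //; apply: hC.
  by rewrite divn_gt0 // dvdn_leq // ltn_divLR.
rewrite coefMr big_ord_recl /= subn0 coef_comp_poly_Xn // dvdn0 div0n.
congr (_ + _); case: eqP => [EK|NK].
  case: K EK Ks => [|K] EK _; first by nia.
  rewrite big_ord_recr /= /bump /= !add1n subnn coef_comp_poly_Xn //.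
  rewrite EK dvdn_mull // mulnK // big1 ?add0r // => i _.
  by rewrite compC0 ?mulr0 //= -EK !ltnS ltn_ord.
rewrite big1 // => i _; rewrite compC0 ?mulr0 // /bump /= add1n.
by have := ltn_ord i; lia.
Qed.

Lemma natr_subr_eq (R : numDomainType) (i j k : nat) :
  i%:R - j%:R = k%:R :> R -> i = (j + k)%N.
Proof. by move/eqP; rewrite subr_eq -natrD eqr_nat addnC => /eqP. Qed.

Lemma mem_of_in_gen2 (T : pred nat) a b t : numerical_semigroup T ->
  T a -> T b -> in_gen2 a b t -> T t.
Proof.
case=> T0 [Tadd _] Ta Tb [i [j ->]].
have Tmul c k : T c -> T (k * c)%N.
  by move=> Tc; elim: k => [|k IH]; rewrite ?mul0n // mulSn Tadd.
by rewrite Tadd ?Tmul.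
Qed.

Section GeomCompRelation.

Variables (T : pred nat) (a q m : nat) (C : {poly algC}).
Hypotheses (sgT : numerical_semigroup T) (a_gt0 : (0 < a)%N).
Hypotheses (q_gt1 : (1 < q)%N) (m_gt1 : (1 < m)%N).
Hypothesis rel : forall K, (T K)%:R - ((q <= K)%N && T (K - q)%N)%:R
  = (geomX a q * (C \Po 'X^(m * a)))`_K.

Let T0 : T 0%N. Proof. by case: sgT. Qed.
Let M_gt0 : (0 < m * a)%N. Proof. by rewrite muln_gt0 a_gt0 ltnW. Qed.
Let a_dvd_M : (a %| m * a)%N. Proof. exact: dvdn_mull. Qed.

Let coef0_geomX : (geomX a q)`_0 = 1.
Proof. by rewrite coef_geomX // dvdn0 div0n ltnW. Qed.

Let C_small1 t : (0 < t < 1)%N -> C`_t = 0.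
Proof. by case: t => [|[]]. Qed.

Lemma coef0_eq1 : C`_0 = 1.
Proof.
have := rel 0%N; rewrite T0 leqNgt (ltnW q_gt1) subr0.
rewrite (coef_geomX_comp_lt _ _ M_gt0 (ltn0Sn 0) C_small1) ?leq0n //.
by rewrite eq_sym mul1n (negbTE (lt0n_neq0 M_gt0)) addr0 coef0_geomX mul1r.
Qed.

Lemma mem_a : T a.
Proof.
have := rel a; rewrite (coef_geomX_comp_lt _ _ M_gt0 (ltn0Sn 0) C_small1).
  rewrite mul1n (_ : (a == m * a)%N = false); last by rewrite ltn_eqF // ltn_Pmull.
  rewrite addr0 coef0_eq1 mulr1 coef_geomX // dvdnn divnn a_gt0 q_gt1 /=.
  by move/natr_subr_eq; case: (T a); case: (_ && _).
by rewrite mul1n leq_pmull // ltnW.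
Qed.

Hypotheses (a_gt1 : (1 < a)%N) (coprime_aq : coprime a q).

Let a_ndvd_q : ~~ (a %| q)%N.
Proof.
by apply/negP => aq; move: coprime_aq; rewrite /coprime (gcdn_idPl aq) gtn_eqF.
Qed.

Lemma mem_q : T q.
Proof.
have := rel q; rewrite coef_geomX_comp_ndvd // leqnn subnn T0.
by move/(@natr_subr_eq _ _ _ 0); case: (T q).
Qed.

Lemma notin_sub_multiple b x l : (b < q)%N -> (0 < l)%N ->
  (x + l * q = b * a)%N -> ~~ T x.
Proof.
move=> bq; elim/ltn_ind: x l => x IH l l0 E.
have nax : ~~ (a %| x)%N.
  apply/negP => ax; have : (a %| l * q)%N by rewrite -(dvdn_addr _ ax) E dvdn_mull.
  rewrite Gauss_dvdl // => /(dvdn_leq l0) al.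
  have : (a * q <= l * q)%N by rewrite leq_mul2r al orbT.
  have : (b * a < q * a)%N by rewrite ltn_mul2r a_gt0.
  nia.
have := rel x; rewrite coef_geomX_comp_ndvd //.
have [qx|_] := leqP q x; last by move/(@natr_subr_eq _ _ _ 0); case: (T x).
rewrite (negbTE (IH (x - q)%N _ l.+1 _ _)) ?andbF //.
- by move/(@natr_subr_eq _ _ _ 0); case: (T x).
- by rewrite ltn_subrL (ltnW q_gt1) (leq_trans (ltnW q_gt1)).
- by rewrite mulSn addnA subnK.
Qed.

Lemma comp_eq1 : C = 1.
Proof.
have Tmul k : T (k * a)%N.
  by apply: (mem_of_in_gen2 sgT mem_a mem_q); exists k, 0%N; rewrite addn0.
suff Cs s : (0 < s)%N -> C`_s = 0.
  by apply/polyP => -[|s]; rewrite coef1 ?coef0_eq1 // Cs.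
elim/ltn_ind: s => s IH s0.
have := rel (s * (m * a))%N.
rewrite (coef_geomX_comp_lt _ _ M_gt0 s0) ?eqxx //; last by move=> t /andP[] *; exact: IH.
rewrite coef0_geomX coef0_eq1 mulr1 mul1r mulnA coef_geomX // dvdn_mull //.
rewrite mulnK // Tmul.
have [smq|qsm] := ltnP (s * m) q; rewrite /=.
  have -> : ((q <= s * m * a)%N && T (s * m * a - q)%N) = false.
    case: leqP => //= qK; apply/negbTE/(notin_sub_multiple smq (ltn0Sn 0)).
    by rewrite mul1n subnK.
  by rewrite subr0 => /(canLR (addKr 1)); rewrite addNr.
have -> : ((q <= s * m * a)%N && T (s * m * a - q)%N).
  have qK : (q <= s * m * a)%N by rewrite (leq_trans qsm) // leq_pmulr.
  have -> : (s * m * a - q = (s * m - q) * a + (a - 1) * q)%N.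
    by rewrite !mulnBl mul1n; nia.
  by rewrite qK (mem_of_in_gen2 sgT mem_a mem_q) //; exists (s * m - q)%N, (a - 1)%N.
by rewrite subrr add0r.
Qed.

Lemma in_gen2_of_mem t : T t -> in_gen2 a q t.
Proof.
elim/ltn_ind: t => t IH Tt.
have [/andP[qt Ttq]|] := boolP ((q <= t)%N && T (t - q)%N).
  have lt_tq_t : (t - q < t)%N by rewrite ltn_subrL ltnW // (leq_trans (ltnW q_gt1)).
  have [i [j E]] := IH (t - q)%N lt_tq_t Ttq.
  by exists i, j.+1; rewrite mulSn addnCA -E subnKC.
move/negbTE => Tnq; have := rel t; rewrite comp_eq1 comp_polyC mulr1 Tnq Tt.
rewrite coef_geomX // => /(@natr_subr_eq _ 1 0 _); rewrite add0n.
by case: (boolP (a %| t)%N) => //= at_ _; exists (t %/ a)%N, 0%N; rewrite addn0 divnK.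
Qed.

End GeomCompRelation.

Lemma toC_eq_prod_PhiC d (P : {poly int}) : (0 < d)%N -> P \is monic ->
  P %| 'X^d - 1 -> toC P = \prod_(e <- divisors d | PhiC e %| toC P) PhiC e.
Proof.
move=> d0 mP dvP; have e0 e : e \in divisors d -> (0 < e)%N.
  by rewrite -dvdn_divisors // => /dvdn_gt0; apply.
apply/eqP; rewrite -eqp_monic ?toC_monic ?monic_prod // => [|e _]; last exact: PhiC_monic.
apply: eqp_dvdp_separable_prod => [||e /e0|e /e0 e_gt0].
- by rewrite prod_PhiC // separable_Xn_sub_1 // pnatr_eq0 -lt0n.
- rewrite prod_PhiC //; case/(Pdiv.IdomainMonic.dvdpP mP): dvP => Q QE.
  by rewrite -toC_XnB1 QE rmorphM dvdp_mull.
- exact: PhiC_dvd_or_coprime.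
- by rewrite size_PhiC ltnS totient_gt0.
Qed.

Lemma horner1_PhiC e : (PhiC e).[1] = (('Phi_e).[1])%:~R.
Proof. by rewrite -[1 in LHS](rmorph1 (intr : int -> algC)) horner_map. Qed.

Lemma horner1_Cyclotomic_expS p k : prime p -> ('Phi_(p ^ k.+1)).[1] = p%:Z.
Proof.
move=> pp; have := horner1_PhiC_expS k pp; rewrite horner1_PhiC.
by rewrite -[p%:R](rmorph_nat (intr : int -> algC)) => /intr_inj ->; rewrite natz.
Qed.

Lemma abs_horner1_Cyclotomic (P : {poly int}) (s : seq nat) e :
  uniq s -> P.[1] = 1 -> toC P = \prod_(f <- s | PhiC f %| toC P) PhiC f ->
  e \in s -> PhiC e %| toC P -> `|('Phi_e).[1]|%N = 1%N.
Proof.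
move=> us P1 PE es dvE.
have {}PE : P = \prod_(f <- s | PhiC f %| toC P) 'Phi_f.
  by apply: toC_inj; rewrite {1}PE rmorph_prod.
move/(congr1 (horner^~ 1)): PE.
rewrite /= horner_prod P1 big_mkcond (bigD1_seq e) //= dvE.
by move/esym/(congr1 absz); rewrite abszM => /eqP; rewrite muln_eq1 => /andP[/eqP].
Qed.

Lemma toC_eq_prod_PhiC_expn_mul p q n (P : {poly int}) :
  prime p -> prime q -> p != q -> P \is monic -> P.[1] = 1 ->
  P %| 'X^(p ^ n * q) - 1 ->
  toC P = \prod_(i <- iota 1 n | PhiC (p ^ i * q) %| toC P) PhiC (p ^ i * q).
Proof.
move=> pp pq npq mP P1 dvP; have p1 := prime_gt1 pp; have q1 := prime_gt1 pq.
have divsE := perm_divisors_expn_mul n pp pq npq.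
pose L := [seq (p ^ i)%N | i <- iota 0 n.+1] ++ [seq (p ^ i * q)%N | i <- iota 0 n.+1].
have PE : toC P = \prod_(e <- L | PhiC e %| toC P) PhiC e.
  by rewrite -(perm_big _ divsE) -toC_eq_prod_PhiC // muln_gt0 expn_gt0 !prime_gt0.
have uniqL : uniq L by rewrite -(perm_uniq divsE) divisors_uniq.
have unitE e := @abs_horner1_Cyclotomic P L e uniqL P1 PE.
rewrite {1}PE big_cat !big_map big1_seq ?mul1r => [|i /andP[dvi ini]].
  rewrite big_cons expn0 mul1n ifN; first exact: mul1r.
  apply/negP => dvq; have qL : q \in L.
    by rewrite mem_cat; apply/orP; right; apply/mapP; exists 0%N; rewrite ?expn0 ?mul1n.
  have := unitE q qL dvq; rewrite -[q in 'Phi_q]expn1 horner1_Cyclotomic_expS //.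
  by rewrite absz_nat => /eqP; rewrite gtn_eqF.
have piL : (p ^ i)%N \in L by rewrite mem_cat map_f.
exfalso; have := unitE _ piL dvi.
case: i {dvi ini piL} => [|k]; last first.
  by rewrite horner1_Cyclotomic_expS // absz_nat => /eqP; rewrite gtn_eqF.
have : (PhiC 1).[1] = 0 by rewrite PhiC1 !hornerE subrr.
by rewrite horner1_PhiC expn0 => /eqP; rewrite intr_eq0 => /eqP ->.
Qed.

(* With [j] maximal such that [PhiC (p ^ i * q)] divides [toC P] for all
   [i <= j], the remaining factors [PhiC (p ^ i * q)], [i > j + 1], are
   polynomials in ['X^(p ^ j.+1)]. *)
Lemma toC_mul_XqB1_geomX_comp p q n (P : {poly int}) :
  prime p -> prime q -> p != q -> P \is monic -> P.[1] = 1 ->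
  P %| 'X^(p ^ n * q) - 1 ->
  exists j, exists2 C : {poly algC}, (j <= n)%N &
    toC P * ('X^q - 1) = ('X - 1) * (geomX (p ^ j) q * (C \Po 'X^(p * p ^ j))).
Proof.
move=> pp pq npq mP P1 dvP; have PE := toC_eq_prod_PhiC_expn_mul pp pq npq mP P1 dvP.
pose R i := PhiC (p ^ i * q) %| toC P.
have [j [jn Rlow Rnext]] : exists j, [/\ (j <= n)%N,
    forall i, (0 < i <= j)%N -> R i & (j < n)%N -> ~~ R j.+1].
  have ex_stop : exists k, (k == n) || ~~ R k.+1 by exists n; rewrite eqxx.
  have [j stop_j min_j] := ex_minnP ex_stop.
  have jn : (j <= n)%N by apply: min_j; rewrite eqxx.
  exists j; split=> // [[|i] // /andP[_ ij]|jn'].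
    by apply/negPn/negP => nRi; have := min_j i; rewrite nRi orbT leqNgt ij => /(_ isT).
  by move: stop_j; rewrite ltn_eqF.
pose C := \prod_(i <- iota j.+1 (n - j) | R i) PhiC (p ^ (i - j.+1) * q).
exists j, C => //; set a := (p ^ j)%N.
have PE' : toC P = (\prod_(i <- iota 1 j) PhiC (p ^ i * q)) * (C \Po 'X^(p * a)).
  rewrite {1}PE -(subnKC jn) iotaD big_cat /= add1n; congr (_ * _).
    rewrite big_seq_cond [RHS]big_seq; apply: eq_bigl => i.
    by case: (boolP (i \in _)) => //; rewrite mem_iota add1n ltnS => /Rlow.
  rewrite rmorph_prod big_seq_cond [RHS]big_seq_cond; apply: eq_big => // i.
  case/andP; rewrite mem_iota => /andP[ji ilt] Ri.
  have ji' : (j.+2 <= i)%N.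
    rewrite ltn_neqAle ji andbT; apply: contraTneq Ri => <-.
    by apply: Rnext; lia.
  have pdv : (p %| p ^ (i - j.+1) * q)%N by rewrite dvdn_mulr // dvdn_exp ?subn_gt0.
  rewrite /= -expnS -PhiC_mul_expn_comp //.
  by rewrite mulnAC -expnD subnK // ltnW.
have nz : ('X^a - 1 : {poly algC}) != 0.
  by rewrite -size_poly_gt0 size_XnsubC // expn_gt0 prime_gt0.
apply: (mulIf nz); rewrite PE'.
transitivity (('X^a - 1) * ('X^q - 1) * (\prod_(i <- iota 1 j) PhiC (p ^ i * q))
  * (C \Po 'X^(p * a))); first by ring.
by rewrite mul_prod_PhiC_expn_mul // -mul_geomX; ring.
Qed.

Lemma dvdp_XnB1_toC (P : {poly int}) a q :
  toC P * ('X^q - 1) = ('X - 1) * geomX a q -> P %| 'X^(a * q) - 1.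
Proof.
move=> PE; suff <- : P * (('X^a - 1) * \sum_(i < q) 'X^i) = 'X^(a * q) - 1.
  exact: dvdp_mulIl.
apply: toC_inj; rewrite toC_XnB1 !rmorphM rmorphB rmorph1 rmorph_sum /= map_polyXn.
have nz : ('X - 1 : {poly algC}) != 0 by rewrite -polyC1 polyXsubC_eq0.
apply: (mulfI nz); rewrite -mul_geomX.
have geom1 : ('X - 1) * \sum_(i < q) 'X^i = 'X^q - 1 :> {poly algC}.
  rewrite -[in LHS](expr1 'X) -[in RHS](mul1n q) -mul_geomX.
  by congr (_ * _); apply: eq_bigr => i _; rewrite muln1.
under eq_bigr do rewrite map_polyXn.
transitivity (toC P * (('X - 1) * \sum_(i < q) 'X^i) * ('X^a - 1)); first by ring.
by rewrite geom1 PE; ring.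
Qed.

Theorem theorem3 (p q n : nat) (T : pred nat) :
  prime p -> prime q -> p != q -> (0 < n)%N ->
  numerical_semigroup T ->
  cyclotomic_depth_height T (p ^ n * q) 1 ->
  forall t : nat, T t <-> in_gen2 (p ^ n) q t.
Proof.
move=> pp pq npq _ sgT [_ [_ [P [PT [dvP [minh mind]]]]]].
rewrite expr1 in dvP; have p_gt1 := prime_gt1 pp; have q_gt1 := prime_gt1 pq.
have [j [C jn PE]] :=
  toC_mul_XqB1_geomX_comp pp pq npq (PT_monic sgT PT) (horner1_PT sgT PT) dvP.
have rel := coef_PT_relation PT PE.
have pj_gt0 : (0 < p ^ j)%N by rewrite expn_gt0 ltnW.
have j_gt0 : (0 < j)%N.
  case: j {jn PE pj_gt0} rel => // rel; apply/negP => _.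
  have /(PT_eq1 sgT PT) P1 := mem_a sgT (ltn0Sn 0) q_gt1 p_gt1 rel.
  by have := minh 1%N isT; rewrite P1 expr0 dvdpp.
have pj_gt1 : (1 < p ^ j)%N by rewrite -(expn0 p) ltn_exp2l.
have cop : coprime (p ^ j) q.
  by rewrite coprimeXl // prime_coprime // dvdn_prime2 // (negbTE npq).
have C1 := comp_eq1 sgT pj_gt0 q_gt1 p_gt1 rel pj_gt1 cop.
have <- : j = n.
  apply/eqP; rewrite eqn_leq jn leqNgt; apply/negP => jn'.
  have dvd_d : (p ^ j * q %| p ^ n * q)%N by rewrite dvdn_mul // dvdn_exp2l // ltnW.
  have lt_d : (p ^ j * q < p ^ n * q)%N by rewrite ltn_pmul2r ?ltn_exp2l // ltnW.
  have d_gt0 : (0 < p ^ j * q)%N by rewrite muln_gt0 pj_gt0 ltnW.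
  have /negP := mind _ d_gt0 dvd_d lt_d; apply; rewrite expr1.
  by apply: dvdp_XnB1_toC; rewrite PE C1 comp_polyC mulr1.
move=> t; split; first exact: in_gen2_of_mem sgT pj_gt0 q_gt1 p_gt1 rel pj_gt1 cop t.
exact: mem_of_in_gen2 sgT (mem_a sgT pj_gt0 q_gt1 p_gt1 rel)
  (mem_q sgT pj_gt0 p_gt1 rel pj_gt1 cop).
Qed.
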